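(* Let $T$ be a balanced tree. Then $T$ is unmixed if and only if (1) $\mathrm{height}(T)\le 3$, (2) for all $v\in V_2$, $|N(v)\cap V_1|=1$, and (3) for all $v\in V_1$, $|N(v)\cap V_2|\le 1$.
   Context: $N(v)=\{u: uv\in E\}$, $N(D)=\bigcup_{v\in D}N(v)$. A leaf is a vertex of degree 1; the height of a vertex is its minimal distance to a leaf (an isolated vertex has height 0); $V_k$ is the set of vertices of height $k$; $\mathrm{height}(T)=\max\{k:V_k\neq\emptyset\}$. A tree is balanced if no two adjacent vertices have the same height. A TD-set is $D\subseteq V$ with $N(D)=V$, minimal if no proper subset is a TD-set; $T$ is unmixed if all minimal TD-sets have the same size. *)

From mathcomp Require Import all_boot.
Set Implicit Arguments. Unset Strict Implicit. Unset Printing Implicit Defensive.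

Section Graph.
Variables (T : finType) (e : rel T).

Definition simple_graph : Prop := symmetric e /\ irreflexive e.

Definition connected_graph : Prop := forall x y : T, connect e x y.

Definition has_cycle : Prop :=
  exists s : seq T, [/\ uniq s, 3 <= size s & cycle e s].

Definition is_tree : Prop :=
  [/\ simple_graph, 0 < #|T|, connected_graph & ~ has_cycle].

Definition nbhd (v : T) : {set T} := [set u | e u v].
Definition nbhdS (D : {set T}) : {set T} := \bigcup_(v in D) nbhd v.

Definition leaf (v : T) : bool := #|nbhd v| == 1.

(* there is a leaf at distance exactly (walk length) k from v;
   the minimal such k is the distance from v to the nearest leaf *)
Definition leaf_within (v : T) (k : nat) : bool :=
  [exists l, leaf l && [exists s : k.-tuple T, path e v s && (last v s == l)]].

(* height of a vertex: minimal distance to a leaf (isolated vertex: 0).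
   In a connected graph all distances are < #|T|, so searching k in
   [0, #|T|) finds the minimum. *)
Definition height (v : T) : nat :=
  if #|nbhd v| == 0 then 0 else find (leaf_within v) (iota 0 #|T|).

Definition Vh (k : nat) : {set T} := [set v | height v == k].

Definition balanced : Prop := forall u v, e u v -> height u != height v.

Definition TDset (D : {set T}) : Prop := nbhdS D = [set: T].
Definition minimal_TDset (D : {set T}) : Prop :=
  TDset D /\ forall D' : {set T}, D' \proper D -> ~ TDset D'.
Definition unmixed : Prop :=
  forall D1 D2, minimal_TDset D1 -> minimal_TDset D2 -> #|D1| = #|D2|.

(* height(T) = max{k : V_k nonempty} *)
Definition tree_height_le (m : nat) : Prop := forall v, height v <= m.

End Graph.

From mathcomp Require Import all_boot zify.
Set Implicit Arguments. Unset Strict Implicit. Unset Printing Implicit Defensive.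

(* In a balanced tree the heights of adjacent vertices differ by exactly one,
   and a vertex of height k+1 has a neighbour of height k.
   If (1)-(3) hold, a minimal TD-set D contains V_1 (the supports of the
   leaves) and meets no vertex of V_3 (its private neighbour would lie in V_2
   and see a vertex of V_1, which is in D).  Every other vertex of D has
   exactly one neighbour in V_1 and every vertex of V_1 has exactly one
   neighbour in D \ V_1, so |D| = 2 |V_1| for every minimal D.
   Conversely, a vertex of height 4, a vertex of V_2 with two neighbours in V_1,
   or, given (1) and (2), a vertex of V_1 with two neighbours in V_2, yields a
   TD-set X such that some minimal TD-set D inside X contains a vertex b and a
   leaf l whose duties a single further vertex q can take over; exchanging
   b and l for q gives a TD-set smaller than D, so T is not unmixed. *)

Section Neighbours.
Variables (T : finType) (e : rel T).
Hypothesis esym : symmetric e.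

Local Notation N := (nbhd e).

Lemma in_nbhd u v : (u \in N v) = e u v.
Proof. by rewrite inE. Qed.

Lemma nbhd_nonempty u v : e u v -> #|N v| != 0.
Proof. by move=> euv; apply/eqP => /card0_eq/(_ u); rewrite in_nbhd euv. Qed.

Lemma connected_nbr u v : connected_graph e -> e u v -> forall z, exists a, e z a.
Proof.
move=> conn euv z; case: (eqVneq z u) => [->|zu]; first by exists v.
have /connectP[[|a p] /= + zlast] := conn z u; first by rewrite -zlast eqxx in zu.
by move=> /andP[eza _]; exists a.
Qed.

(* Defaults to [v] when [v] has no neighbour satisfying [p]. *)
Definition nbr_such v (p : pred T) := odflt v [pick x | e v x && p x].

Lemma nbr_suchP v (p : pred T) : (exists2 x, e v x & p x) ->
  e v (nbr_such v p) /\ p (nbr_such v p).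
Proof.
move=> [x evx px]; rewrite /nbr_such; case: pickP => [y /andP[]|/(_ x)] //=.
by rewrite evx px.
Qed.

Lemma leaf_nbr_uniq l a b : leaf e l -> e l a -> e l b -> a = b.
Proof.
move=> /cards1P[c Nl] ela elb.
have : a \in N l by rewrite in_nbhd esym.
have : b \in N l by rewrite in_nbhd esym.
by rewrite Nl !inE => /eqP -> /eqP ->.
Qed.

Lemma nonleaf_other_nbr v a : #|N v| != 0 -> ~~ leaf e v -> exists2 b, e v b & b != a.
Proof.
move=> Nv nleaf; have : 1 < #|N v| by move: Nv nleaf; rewrite /leaf; lia.
move=> /card_gt1P[x [y [+ + xy]]]; rewrite !in_nbhd => exv eyv.
case: (eqVneq x a) => [xa|]; last by exists x; rewrite // esym.
by exists y; rewrite 1?esym // -xa eq_sym.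
Qed.

End Neighbours.

Section Heights.
Variables (T : finType) (e : rel T).
Hypothesis esym : symmetric e.

Local Notation N := (nbhd e).
Local Notation ht := (height e).

Lemma leaf_withinP v k :
  reflect (exists p : seq T, [/\ size p = k, path e v p & leaf e (last v p)])
          (leaf_within e v k).
Proof.
apply: (iffP existsP) => [[l /andP[lf /existsP[s /andP[vs /eqP sl]]]]|[p [pk vp lf]]].
  by exists (tval s); rewrite size_tuple sl.
have pk' : size p == k by rewrite pk.
by exists (last v p); rewrite lf; apply/existsP; exists (Tuple pk'); rewrite /= vp eqxx.
Qed.

Lemma height_le_card v : ht v <= #|T|.
Proof.
rewrite /height; case: ifP => // _.
by apply: leq_trans (find_size _ _) _; rewrite size_iota.
Qed.

Lemma leaf_within_height v : #|N v| != 0 -> ht v < #|T| -> leaf_within e v (ht v).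
Proof.
move=> Nv; rewrite /height (negbTE Nv) => found.
have has_leaf : has (leaf_within e v) (iota 0 #|T|) by rewrite has_find size_iota.
by have := nth_find 0 has_leaf; rewrite nth_iota.
Qed.

Lemma height_le_leaf_within v k : #|N v| != 0 -> leaf_within e v k -> ht v <= k.
Proof.
move=> Nv vk; case: (ltnP k #|T|) => [kT|]; last exact: leq_trans (height_le_card v).
rewrite /height (negbTE Nv) leqNgt; apply/negP => lt_k.
by have := before_find 0 lt_k; rewrite nth_iota // vk.
Qed.

Lemma leaf_height0 v : leaf e v -> ht v = 0.
Proof.
move=> lv; apply/eqP; rewrite -leqn0; apply: height_le_leaf_within.
  by move: lv => /eqP ->.
by apply/leaf_withinP; exists [::].
Qed.

Lemma height0_leaf v : #|N v| != 0 -> ht v = 0 -> leaf e v.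
Proof.
move=> Nv v0.
have vT : ht v < #|T| by rewrite v0; apply/card_gt0P; exists v.
by have := leaf_within_height Nv vT; rewrite v0 => /leaf_withinP[p [+ _ +]]; case: p.
Qed.

Lemma height_adj_le u v : e u v -> ht u <= (ht v).+1.
Proof.
move=> euv.
have Nu : #|N u| != 0 by apply: (nbhd_nonempty (u := v)); rewrite esym.
case: (ltnP (ht v) #|T|) => [vT|]; last by move/(leq_trans (height_le_card u))/leqW.
have /leaf_withinP[p [pv vp lf]] := leaf_within_height (nbhd_nonempty euv) vT.
apply: height_le_leaf_within => //.
by apply/leaf_withinP; exists (v :: p); rewrite /= pv euv.
Qed.

Lemma leaf_walk_height_lt_card v p :
  #|N v| != 0 -> path e v p -> leaf e (last v p) -> ht v < #|T|.
Proof.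
move=> Nv vp; case: (shortenP vp) => p' vp' uniq_p' _ lf.
have short : size (v :: p') <= #|T| by rewrite -(card_uniqP uniq_p') max_card.
apply: leq_ltn_trans (short).
by apply: height_le_leaf_within => //; apply/leaf_withinP; exists p'.
Qed.

Lemma nbhd_nonempty_height v : ht v != 0 -> #|N v| != 0.
Proof. by apply: contra => /eqP N0; rewrite /height N0. Qed.

Lemma other_nbr v a : ht v != 0 -> exists2 b, e v b & b != a.
Proof.
move=> v0; apply: (nonleaf_other_nbr esym) (nbhd_nonempty_height v0) _.
by apply: contra v0 => /leaf_height0 ->.
Qed.

Hypothesis bal : balanced e.

(* The search in [height] succeeds, so [ht v] is a distance to a leaf and not
   the fallback value [#|T|]. *)
Lemma height_lt_card v : #|N v| != 0 -> ht v < #|T|.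
Proof.
move=> Nv; rewrite ltnNge; apply/negP => vT.
have [u] : exists u, u \in N v by apply/card_gt0P; rewrite lt0n.
rewrite in_nbhd => euv.
have uT : ht u < #|T|.
  by move: (bal euv) (height_le_card u) (height_le_card v) vT; lia.
have Nu : #|N u| != 0 by apply: (nbhd_nonempty (u := v)); rewrite esym.
have /leaf_withinP[p [_ up lf]] := leaf_within_height Nu uT.
have := @leaf_walk_height_lt_card v (u :: p) Nv; rewrite /= esym euv up.
by move=> /(_ isT lf); rewrite ltnNge vT.
Qed.

Lemma height_down v k : ht v = k.+1 -> exists2 u, e v u & ht u = k.
Proof.
move=> vk.
have Nv : #|N v| != 0 by apply/eqP => N0; move: vk; rewrite /height N0.
have := leaf_within_height Nv (height_lt_card Nv).
move=> /leaf_withinP[[|u p] []]; rewrite vk // => -[pk] /= /andP[evu up] lf.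
exists u => //; apply/eqP; rewrite eqn_leq.
have Nu := nbhd_nonempty evu.
have -> : ht u <= k by apply: height_le_leaf_within => //; apply/leaf_withinP; exists p.
by have := height_adj_le evu; rewrite vk.
Qed.

Lemma height_realized v k : k <= ht v -> exists u, ht u = k.
Proof.
move vn : (ht v) => n; elim: n v vn => [|n IH] v vn.
  by rewrite leqn0 => /eqP->; exists v.
rewrite leq_eqVlt => /orP[/eqP->|]; first by exists v.
by have [u _ un] := height_down vn; rewrite ltnS; apply: IH un.
Qed.

Lemma height_adj u v : e u v -> ht u = (ht v).+1 \/ ht v = (ht u).+1.
Proof.
move=> euv; have := height_adj_le euv; have := bal euv.
have := @height_adj_le v u; rewrite esym => /(_ euv); lia.
Qed.

Lemma nonadj_of_height u v : ht u != (ht v).+1 -> ht v != (ht u).+1 -> ~~ e u v.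
Proof. by move=> uv vu; apply/negP => /height_adj[] /eqP; apply/negP. Qed.

Lemma nonadj_of_height_gap u v : (ht u).+1 < ht v -> ~~ e u v.
Proof. by move=> gap; apply/negP => /height_adj; lia. Qed.

Lemma height_neq u v : ht u != ht v -> u != v.
Proof. by apply: contra => /eqP ->. Qed.

Lemma height_lt_neq u v : ht u < ht v -> u != v.
Proof. by move=> lt_uv; apply: height_neq; rewrite ltn_eqF. Qed.

Lemma leaf_nbr_height1 l a : leaf e l -> e l a -> ht a = 1.
Proof. by move=> lf ela; have := height_adj ela; rewrite leaf_height0 //; lia. Qed.

Lemma height1_leaf_nbr s : ht s = 1 -> exists2 l, e s l & leaf e l.
Proof.
move=> s1; have [l esl l0] := height_down s1.
by exists l => //; apply: height0_leaf => //; apply: nbhd_nonempty esl.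
Qed.

End Heights.

Section TotalDomination.
Variables (T : finType) (e : rel T).
Hypothesis esym : symmetric e.

Lemma TDsetP (D : {set T}) : TDset e D <-> forall v, exists2 d, d \in D & e v d.
Proof.
split => [TD v|dom].
  have : v \in nbhdS e D by rewrite TD inE.
  by move=> /bigcupP[d dD]; rewrite in_nbhd; exists d.
apply/setP => v; rewrite inE; have [d dD evd] := dom v.
by apply/bigcupP; exists d; rewrite ?in_nbhd.
Qed.

Lemma not_TDset (D : {set T}) : ~ TDset e D -> exists v, {in D, forall d, ~~ e v d}.
Proof.
move=> notTD; have : ~~ ([set: T] \subset nbhdS e D).
  by apply/negP => sub; apply: notTD; apply/eqP; rewrite eqEsubset subsetT.
move=> /subsetPn[v _ vD]; exists v => d dD; apply: contra vD => evd.
by apply/bigcupP; exists d; rewrite ?in_nbhd.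
Qed.

Lemma minimal_TDset_private (D : {set T}) d : minimal_TDset e D -> d \in D ->
  exists2 u, e u d & {in D, forall d', e u d' -> d' = d}.
Proof.
move=> [TD minD] dD; have [u uD] := not_TDset (minD _ (properD1 dD)).
have private d' : d' \in D -> e u d' -> d' = d.
  move=> d'D eud'; apply/eqP; apply: contraTT eud' => d'd.
  by apply: uD; rewrite in_setD1 d'd.
have [d' d'D eud'] := (TDsetP D).1 TD u.
by exists u; rewrite // -(private d' d'D eud').
Qed.

Lemma TDset_minimal_sub (X : {set T}) :
  TDset e X -> exists2 D : {set T}, D \subset X & minimal_TDset e D.
Proof.
move=> TDX; pose P := fun D : {set T} => (D \subset X) && (nbhdS e D == setT).
have PX : P X by rewrite /P subxx; apply/eqP.
case: (arg_minnP (fun D : {set T} => #|D|) PX) => D /andP[sDX /eqP TDD] minD.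
exists D => //; split => // D' ltD'D TDD'.
have := minD D'; rewrite /P (subset_trans (proper_sub ltD'D) sDX) TDD' eqxx.
by move=> /(_ isT); rewrite leqNgt proper_card.
Qed.

Lemma sole_nbr_mem (X D : {set T}) v f : D \subset X -> TDset e D ->
  {in X, forall a, e v a -> a = f} -> f \in D.
Proof.
move=> sDX TD vf; have [d dD evd] := (TDsetP D).1 TD v.
by rewrite -(vf d (subsetP sDX d dD) evd).
Qed.

Lemma unmixed_card_le (D D' : {set T}) : unmixed e -> minimal_TDset e D -> TDset e D' ->
  #|D| <= #|D'|.
Proof.
move=> unm minD TD'; have [D'' sD''D' minD''] := TDset_minimal_sub TD'.
by rewrite (unm _ _ minD minD''); apply: subset_leq_card.
Qed.

Lemma TDset_swap (D : {set T}) a b c : TDset e D ->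
  (forall v, e v a || e v b -> e v c \/ exists2 d, d \in D :\: [set a; b] & e v d) ->
  TDset e (c |: (D :\: [set a; b])).
Proof.
move=> TD ab_covered; apply/TDsetP => v.
have [d dD evd] := (TDsetP D).1 TD v.
have [evc|[d' d'D evd']] : e v c \/ exists2 d, d \in D :\: [set a; b] & e v d.
- case: (boolP (d \in [set a; b])) => [/set2P[] eq_d|dab].
  + by apply: ab_covered; rewrite -eq_d evd.
  + by apply: ab_covered; rewrite -eq_d evd orbT.
  + by right; exists d; rewrite // inE dab.
- by exists c; rewrite ?setU11.
- by exists d'; rewrite // inE d'D orbT.
Qed.

Lemma card_swap (D : {set T}) a b c : a \in D -> b \in D -> a != b ->
  #|c |: (D :\: [set a; b])| < #|D|.
Proof.
move=> aD bD ab; have sabD : [set a; b] \subset D by rewrite subUset !sub1set aD bD.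
rewrite cardsU1 cardsD (setIidPr sabD) cards2 ab.
have := subset_leq_card sabD; rewrite cards2 ab; case: (c \notin _) => /=; lia.
Qed.

(* If [b] is the only neighbour of [w] in [X], then some minimal TD-set
   [D] inside [X] contains [b] and a leaf [l] at [sq]; the single vertex [q]
   then takes over both duties of [b] and [l], giving a smaller TD-set. *)
Lemma unmixed_swap_contra (X : {set T}) w b q sq :
  unmixed e -> TDset e X -> {in X, forall a, e w a -> a = b} ->
  e w q -> e q sq -> ~~ e b sq -> {in X, forall l, e sq l -> leaf e l} ->
  (forall a, e a b -> a != w ->
     exists v f, [/\ {in X, forall c, e v c -> c = f}, e a f & f != b]) ->
  False.
Proof.
move=> unm TDX wb ewq eqsq nbsq sq_leaf b_covered.
have [D sDX minD] := TDset_minimal_sub TDX; have TDD := minD.1.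
have bD : b \in D := sole_nbr_mem sDX TDD wb.
have [l lD esql] := (TDsetP D).1 TDD sq.
have lf : leaf e l := sq_leaf l (subsetP sDX l lD) esql.
have bl : b != l by apply: contraNneq nbsq => ->; rewrite esym.
have l_nbr v : e v l -> e v q.
  by move=> evl; rewrite (leaf_nbr_uniq esym lf (_ : e l v) (_ : e l sq)) 1?esym.
have TDD' : TDset e (q |: (D :\: [set b; l])).
  apply: TDset_swap => // v /orP[evb|/l_nbr]; last by left.
  case: (eqVneq v w) => [->|vw]; first by left.
  have [u [f [uf evf fb]]] := b_covered v evb vw.
  case: (eqVneq f l) => [fl|fl]; first by left; apply: l_nbr; rewrite -fl.
  by right; exists f; rewrite // !inE negb_or fb fl (sole_nbr_mem sDX TDD uf).
by have := unmixed_card_le unm minD TDD'; rewrite leqNgt card_swap.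
Qed.

End TotalDomination.

Section Trees.
Variables (T : finType) (e : rel T).
Hypothesis esym : symmetric e.
Hypothesis eirr : irreflexive e.
Hypothesis acyclic : ~ has_cycle e.

Lemma irr_neq u v : e u v -> u != v.
Proof. by apply: contraTneq => ->; rewrite eirr. Qed.

Lemma acyclic_walk_nbr z a p : path e a p -> a != last a p ->
  z \notin a :: p -> e z a -> ~~ e z (last a p).
Proof.
move=> ap; case: (shortenP ap) => p' ap' uniq_p' sub_p' a_last zp eza.
apply/negP => ezb; apply: acyclic; exists [:: z, a & p']; split.
- rewrite /= -/(uniq (a :: p')) uniq_p' andbT; apply: contra zp.
  by rewrite !inE => /orP[->|/sub_p'->]; rewrite ?orbT.
- by case: p' {ap' uniq_p' sub_p' ezb} a_last => //=; rewrite eqxx.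
- by rewrite /cycle rcons_path /= eza ap' esym.
Qed.

Definition dominated (X : {set T}) q := [exists a in X, e q a].

Lemma dominatedW (X : {set T}) q a : a \in X -> e q a -> dominated X q.
Proof. by move=> aX eqa; apply/existsP; exists a; rewrite aX. Qed.

Hypothesis no_isolated : forall z, exists a, e z a.

(* An undominated vertex [z] that is not a leaf has two neighbours outside [X];
   the dominated walks from them to [h] avoid [z] and close a cycle through it. *)
Lemma TDset_of_dominated_walks (X : {set T}) h :
  (forall l a, leaf e l -> e l a -> a \in X) ->
  (forall r, r \notin X ->
     exists2 p, path e r p & (last r p == h) && all (dominated X) p) ->
  TDset e X.
Proof.
move=> leaf_nbrX walk; apply/TDsetP => z.
case: (boolP (dominated X z)) => [/existsP[a /andP[aX eza]]|zX]; first by exists a.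
have nbrX c : e z c -> c \notin X.
  by move=> ezc; apply: contra zX => cX; apply: dominatedW ezc.
have [a eza] := no_isolated z.
have nleaf : ~~ leaf e z by apply: contraL (nbrX a eza) => /leaf_nbrX ->.
have eaz : e a z by rewrite esym.
have [b ezb ba] := nonleaf_other_nbr esym a (nbhd_nonempty eaz) nleaf.
have [pa apa /andP[/eqP pah dom_pa]] := walk a (nbrX a eza).
have [pb bpb /andP[/eqP pbh dom_pb]] := walk b (nbrX b ezb).
have off_walk pc : all (dominated X) pc -> z \notin pc.
  by move=> dom_pc; apply/negP => /(allP dom_pc); rewrite (negbTE zX).
have last_walk : last a (pa ++ rev (belast b pb)) = b.
  rewrite last_cat pah -pbh; case: pb {bpb dom_pb pbh} => //= c pb.
  by rewrite rev_cons last_rcons.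
suff : ~~ e z b by rewrite ezb.
rewrite -last_walk; apply: acyclic_walk_nbr => //.
- by rewrite cat_path apa pah -pbh rev_path (@eq_path _ _ e) // => x y; rewrite esym.
- by rewrite last_walk eq_sym.
- rewrite inE negb_or mem_cat mem_rev negb_or eq_sym irr_neq // off_walk //=.
  apply/negP => /mem_belast; rewrite inE (negbTE (irr_neq ezb)) /=.
  exact/negP/off_walk.
Qed.

End Trees.

Section Exclusion.
Variables (T : finType) (e : rel T).
Hypothesis esym : symmetric e.
Hypothesis bal : balanced e.

Local Notation N := (nbhd e).
Local Notation ht := (height e).

(* [~: exclusion P sq] is the largest set in which, for every [p \in P], [p.2]
   is the only neighbour of [p.1] (we say that [p.2] is forced by [p.1]), and
   no neighbour of [sq] has height 2. *)
Definition exclusion (P : {set T * T}) sq : {set T} :=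
  \bigcup_(p in P) (N p.1 :\ p.2) :|: (N sq :&: Vh e 2).

Lemma notin_exclusion (P : {set T * T}) sq x :
  (forall p, p \in P -> e x p.1 -> x = p.2) -> (e x sq -> ht x != 2) ->
  x \notin exclusion P sq.
Proof.
move=> sole sq2; rewrite !inE negb_or; apply/andP; split.
  by apply/bigcupP => -[p pP]; rewrite !inE => /andP[/eqP + /(sole p pP)].
by rewrite negb_and; case: (boolP (e x sq)) => //= /sq2.
Qed.

Lemma exclusionP (P : {set T * T}) sq r : r \in exclusion P sq ->
  (exists2 p, p \in P & e r p.1) \/ e r sq.
Proof.
rewrite !inE => /orP[/bigcupP[p pP]|/andP[]]; rewrite ?inE; last by right.
by move=> /andP[_ erp]; left; exists p.
Qed.

Lemma exclusion_sole_nbr (P : {set T * T}) sq p : p \in P ->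
  {in ~: exclusion P sq, forall a, e p.1 a -> a = p.2}.
Proof.
move=> pP a; rewrite inE => aR epa; apply/eqP; apply: contraNT aR => ap.
by rewrite !inE; apply/orP; left; apply/bigcupP; exists p; rewrite // !inE ap esym.
Qed.

Lemma exclusion_leaf (P : {set T * T}) sq : ht sq = 1 ->
  {in ~: exclusion P sq, forall l, e sq l -> leaf e l}.
Proof.
move=> sq1 l; rewrite !inE negb_or => /andP[_ nl2] esql.
have [l0|l2] : ht l = 0 \/ ht l = 2 by have := height_adj esym bal esql; rewrite sq1; lia.
  exact: height0_leaf (nbhd_nonempty esql) l0.
by move: nl2; rewrite esym esql l2.
Qed.

Lemma unmixed_exclusion_contra (P : {set T * T}) sq w b q :
  unmixed e -> (w, b) \in P -> e w q -> e q sq -> ht sq = 1 -> ~~ e b sq ->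
  (forall a, e a b -> a != w -> exists2 p, p \in P & e a p.2 && (p.2 != b)) ->
  TDset e (~: exclusion P sq) -> False.
Proof.
move=> unm wbP ewq eqsq sq1 nbsq b_covered TD.
apply: (unmixed_swap_contra esym unm TD (exclusion_sole_nbr wbP) ewq eqsq nbsq).
  exact: exclusion_leaf.
move=> a eab aw; have [p pP /andP[eap pb]] := b_covered a eab aw.
by exists p.1, p.2; split => //; apply: exclusion_sole_nbr.
Qed.

End Exclusion.

(* Side conditions of [acyclic_walk_nbr] on an explicit walk: every edge and
   every disequality must follow from a hypothesis, from irreflexivity, or
   from distinct known heights. *)
Ltac edge_by_hyp := first [ assumption
  | match goal with hsym : symmetric _ |- _ => rewrite hsym; assumption end ].
Ltac rewrite_heights :=
  repeat match goal with H : height _ ?x = _ |- context [height _ ?x] => rewrite H end.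
Ltac side_by_hyp := solve [ done | edge_by_hyp | rewrite eq_sym; done
  | match goal with hirr : irreflexive _ |- _ =>
      first [ apply: (irr_neq hirr); edge_by_hyp
            | rewrite eq_sym; apply: (irr_neq hirr); edge_by_hyp ] end
  | match goal with hbal : balanced ?e |- _ =>
      apply: (@height_neq _ e); rewrite_heights; done end ].
Ltac path_by_hyps := rewrite /= ?andbT; repeat (apply/andP; split); edge_by_hyp.
Tactic Notation "walk" constr(a) constr(p) :=
  match goal with hsym : symmetric _, hacyc : ~ has_cycle _ |- _ =>
    apply: (acyclic_walk_nbr hsym hacyc (a := a) (p := p));
    rewrite /= ?inE ?negb_or ?andbT; repeat (apply/andP; split); try side_by_hyp end.

Module HeightFour.
Section Graph.
Variables (T : finType) (e : rel T).
Hypothesis esym : symmetric e.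
Hypothesis eirr : irreflexive e.
Hypothesis bal : balanced e.
Hypothesis acyclic : ~ has_cycle e.
Hypothesis no_isolated : forall z, exists a, e z a.
Hypothesis unm : unmixed e.

Local Notation N := (nbhd e).
Local Notation ht := (height e).
Local Notation TDset_of_walks := (TDset_of_dominated_walks esym eirr acyclic no_isolated).
Local Notation exclusion_contra := (unmixed_exclusion_contra esym bal).

(* The vertex [t]
   is forced by [w]; every other neighbour [i] of height 3 (resp. [j] of
   height 5) of [t] sees [f3 i] forced by [g3 i] (resp. [f5 j] forced by
   [g5 j]); and [xw] replaces [t] and the leaf at [sq]. *)
Section Configuration.
Variables (t w xw sq lq : T).
Hypotheses (t4 : ht t = 4) (etw : e t w) (w3 : ht w = 3) (ewxw : e w xw).
Hypotheses (xw2 : ht xw = 2) (exwsq : e xw sq) (sq1 : ht sq = 1).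
Hypotheses (esqlq : e sq lq) (lf_lq : leaf e lq).

Let N3 := N t :&: Vh e 3 :\ w.
Let N5 := N t :&: Vh e 5.
Let f3 i := nbr_such e i (fun x => ht x == 2).
Let g3 i := nbr_such e (f3 i) (fun x => ht x == 1).
Let f5 j := nbr_such e j (fun x => x != t).
Let g5 j := nbr_such e (f5 j) (fun x => x != j).

Lemma N3P i : i \in N3 -> [/\ e i t, ht i = 3 & i != w].
Proof. by rewrite !inE => /and3P[-> -> /eqP ->]. Qed.

Lemma N5P j : j \in N5 -> e j t /\ ht j = 5.
Proof. by rewrite !inE => /andP[-> /eqP ->]. Qed.

Lemma f3P i : i \in N3 -> e i (f3 i) /\ ht (f3 i) = 2.
Proof.
move=> /N3P[_ i3 _]; have [x eix x2] := height_down esym bal i3.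
have [|-> /eqP //] := @nbr_suchP _ e i (fun x => ht x == 2).
by exists x; rewrite ?x2.
Qed.

Lemma g3P i : i \in N3 -> e (f3 i) (g3 i) /\ ht (g3 i) = 1.
Proof.
move=> /f3P[_ f2]; have [x ex x1] := height_down esym bal f2.
have [|-> /eqP //] := @nbr_suchP _ e (f3 i) (fun x => ht x == 1).
by exists x; rewrite ?x1.
Qed.

Lemma f5P j : j \in N5 -> e j (f5 j) /\ f5 j != t.
Proof.
move=> /N5P[_ j5]; apply: nbr_suchP.
by apply: (other_nbr esym); rewrite j5.
Qed.

Lemma f5_height j : j \in N5 -> 3 < ht (f5 j).
Proof.
by move=> /[dup] /N5P[_ j5] /f5P[ejc _]; have := height_adj esym bal ejc; rewrite j5; lia.
Qed.

Lemma g5P j : j \in N5 -> e (f5 j) (g5 j) /\ g5 j != j.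
Proof.
move=> jN; apply: nbr_suchP.
by apply: (other_nbr esym); rewrite -lt0n (ltn_trans _ (f5_height jN)).
Qed.

Lemma g5_height j : j \in N5 -> 2 < ht (g5 j).
Proof.
move=> jN; have [ecv _] := g5P jN; have := height_adj esym bal ecv.
by have := f5_height jN; lia.
Qed.

Lemma g5_neq_t j : j \in N5 -> g5 j != t.
Proof.
move=> jN; have [ejt _] := N5P jN; have [ejc ct] := f5P jN; have [ecv _] := g5P jN.
apply: contraTneq ecv => ->; rewrite esym.
by walk j [:: f5 j].
Qed.

Lemma t_nadj_g5 j : j \in N5 -> ~~ e t (g5 j).
Proof.
move=> jN; have [ejt _] := N5P jN; have [ejc ct] := f5P jN; have [ecv vj] := g5P jN.
have vt := g5_neq_t jN.
by walk j [:: f5 j; g5 j].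
Qed.

Lemma g5_nadj_w j : j \in N5 -> ~~ e (g5 j) w.
Proof.
move=> jN; have [ejt _] := N5P jN; have [ejc _] := f5P jN; have [ecv vj] := g5P jN.
have vt := g5_neq_t jN.
have wc : w != f5 j by apply: (@height_lt_neq _ e); rewrite w3 f5_height.
apply/negP => evw; suff : ~~ e (g5 j) (f5 j) by rewrite esym ecv.
by walk w [:: t; j; f5 j].
Qed.

Lemma N5_nadj_g5 y j : y \in N5 -> j \in N5 -> y != f5 j -> ~~ e y (g5 j).
Proof.
move=> yN jN yc; have [eyt _] := N5P yN; have [ejt _] := N5P jN.
have [ejc _] := f5P jN; have [ecv vj] := g5P jN; have vt := g5_neq_t jN.
apply/negP => eyv; suff : ~~ e (g5 j) (f5 j) by rewrite esym ecv.
by walk y [:: t; j; f5 j].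
Qed.

Lemma sq_nadj_f3 i : i \in N3 -> ~~ e sq (f3 i).
Proof.
move=> iN; have [eit i3 iw] := N3P iN; have [eix x2] := f3P iN.
case: (eqVneq xw (f3 i)) => [xwi|xwi].
  suff : ~~ e xw i by rewrite xwi esym eix.
  by walk w [:: t; i].
by walk xw [:: w; t; i; f3 i].
Qed.

Lemma f3_nadj_w i : i \in N3 -> ~~ e (f3 i) w.
Proof.
move=> iN; have [eit _ iw] := N3P iN; have [eix x2] := f3P iN.
by rewrite esym; walk t [:: i; f3 i].
Qed.

Lemma f3_nadj_g3 i i' : i \in N3 -> i' \in N3 -> f3 i != f3 i' -> ~~ e (f3 i) (g3 i').
Proof.
move=> iN i'N ff'; have [eit i3 _] := N3P iN; have [eix x2] := f3P iN.
have [ei't i'3 _] := N3P i'N; have [ei'x _] := f3P i'N; have [exs s1] := g3P i'N.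
by walk i [:: t; i'; f3 i'; g3 i'].
Qed.

Lemma f3_nadj_g5 i j : i \in N3 -> j \in N5 -> ~~ e (f3 i) (g5 j).
Proof.
move=> iN jN; have [eit _ _] := N3P iN; have [eix x2] := f3P iN.
have [ejt _] := N5P jN; have [ejc _] := f5P jN; have [ecv vj] := g5P jN.
have vt := g5_neq_t jN.
have xc : f3 i != f5 j.
  by apply: (@height_lt_neq _ e); rewrite x2 ltnW // f5_height.
have vi : g5 j != i by apply: contraNneq (t_nadj_g5 jN) => ->; rewrite esym.
apply/negP => exv; suff : ~~ e (g5 j) (f5 j) by rewrite esym ecv.
by walk (f3 i) [:: i; t; j; f5 j].
Qed.

Lemma f5_nadj_w j : j \in N5 -> ~~ e (f5 j) w.
Proof.
move=> jN; have [ejt j5] := N5P jN; have [ejc ct] := f5P jN.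
have wc : w != f5 j by apply: (@height_lt_neq _ e); rewrite w3 f5_height.
by rewrite esym; walk t [:: j; f5 j].
Qed.

Lemma f5_nadj_g5 j j' : j \in N5 -> j' \in N5 -> f5 j != f5 j' -> ~~ e (f5 j) (g5 j').
Proof.
move=> jN j'N cjj'; have [ejt _] := N5P jN; have [ejc _] := f5P jN.
have [ej't _] := N5P j'N; have [ej'c _] := f5P j'N; have [ecv vj'] := g5P j'N.
have vt := g5_neq_t j'N.
have vj : g5 j' != j by apply: contraNneq (t_nadj_g5 j'N) => ->; rewrite esym.
apply/negP => ecv'; suff : ~~ e (g5 j') (f5 j') by rewrite esym ecv.
by walk (f5 j) [:: j; t; j'; f5 j'].
Qed.

Let pairs := (w, t) |: ([set (g3 i, f3 i) | i in N3] :|: [set (g5 j, f5 j) | j in N5]).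
Let R := exclusion e pairs sq.

Lemma notinR x : (e x w -> x = t) ->
  {in N3, forall i, e x (g3 i) -> x = f3 i} ->
  {in N5, forall j, e x (g5 j) -> x = f5 j} -> (e x sq -> ht x != 2) ->
  x \notin R.
Proof.
move=> xw_t x_g3 x_g5 xsq; apply: notin_exclusion xsq => p.
rewrite !inE => /orP[/eqP-> //|/orP[] /imsetP[k kN ->]]; [exact: x_g3 | exact: x_g5].
Qed.

Lemma height1_notinR r : ht r = 1 -> r \notin R.
Proof.
move=> r1; apply: notinR; last by rewrite r1.
- by rewrite (negbTE (nonadj_of_height esym bal _ _)) // r1 w3.
- by move=> i /g3P[_ s1] /bal; rewrite r1 s1.
- move=> j /g5_height v2; rewrite (negbTE (nonadj_of_height_gap esym bal _)) //.
  by rewrite r1.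
Qed.

Lemma t_notinR : t \notin R.
Proof.
apply: notinR => //; last by rewrite t4.
- by move=> i /g3P[_ s1]; rewrite (negbTE (nonadj_of_height esym bal _ _)) // t4 s1.
- by move=> j /t_nadj_g5 /negbTE ->.
Qed.

Lemma w_notinR : w \notin R.
Proof.
apply: notinR; last by rewrite w3.
- by rewrite eirr.
- by move=> i /g3P[_ s1]; rewrite (negbTE (nonadj_of_height esym bal _ _)) // w3 s1.
- by move=> j /g5_nadj_w; rewrite esym => /negbTE ->.
Qed.

Lemma N5_notinR y : y \in N5 -> y \notin R.
Proof.
move=> yN; have [_ y5] := N5P yN; apply: notinR; last by rewrite y5.
- by rewrite (negbTE (nonadj_of_height esym bal _ _)) // y5 w3.
- by move=> i /g3P[_ s1]; rewrite (negbTE (nonadj_of_height esym bal _ _)) // y5 s1.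
- move=> j jN; case: (eqVneq y (f5 j)) => // ycj.
  by rewrite (negbTE (N5_nadj_g5 yN jN ycj)).
Qed.

Lemma lq_notinR : lq \notin R.
Proof.
have lq0 := leaf_height0 lf_lq; apply: notinR; last by rewrite lq0.
- by rewrite (negbTE (nonadj_of_height esym bal _ _)) // lq0 w3.
- move=> i iN elqs; have [exs _] := g3P iN.
  have sgsq : g3 i = sq by apply: (leaf_nbr_uniq esym lf_lq elqs); rewrite esym.
  by move: (sq_nadj_f3 iN); rewrite esym -sgsq exs.
- move=> j /g5_height v2; rewrite (negbTE (nonadj_of_height_gap esym bal _)) //.
  by rewrite lq0 ltnW.
Qed.

Lemma f3_notinR i : i \in N3 -> f3 i \notin R.
Proof.
move=> iN; apply: notinR.
- by rewrite (negbTE (f3_nadj_w iN)).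
- move=> i' i'N; case: (eqVneq (f3 i) (f3 i')) => // ff'.
  by rewrite (negbTE (f3_nadj_g3 iN i'N ff')).
- by move=> j jN; rewrite (negbTE (f3_nadj_g5 iN jN)).
- by rewrite esym (negbTE (sq_nadj_f3 iN)).
Qed.

Lemma f5_notinR j : j \in N5 -> f5 j \notin R.
Proof.
move=> jN; have c3 := f5_height jN; apply: notinR.
- by rewrite (negbTE (f5_nadj_w jN)).
- move=> i /g3P[_ s1]; rewrite esym (negbTE (nonadj_of_height_gap esym bal _)) //.
  by rewrite s1 ltnW.
- move=> j' j'N; case: (eqVneq (f5 j) (f5 j')) => // cjj'.
  by rewrite (negbTE (f5_nadj_g5 jN j'N cjj')).
- by rewrite gtn_eqF // (ltn_trans _ c3).
Qed.

Lemma TDset_compl_R : TDset e (~: R).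
Proof.
have domR q a : a \notin R -> e q a -> dominated e (~: R) q.
  by move=> aR; apply: dominatedW; rewrite inE.
have dom_t : dominated e (~: R) t := domR t w w_notinR etw.
have dom_w : dominated e (~: R) w by apply: (domR w t t_notinR); rewrite esym.
apply: (TDset_of_walks (h := t)) => [l a lf ela|r].
  by rewrite inE height1_notinR // (leaf_nbr_height1 esym bal lf ela).
rewrite inE negbK => /exclusionP[[p]|ersq].
- rewrite !inE => /orP[/eqP-> erw|/orP[] /imsetP[k kN ->] erp].
  + by exists [:: w; t]; [path_by_hyps | rewrite /= eqxx dom_w dom_t].
  + have [ekt _ _] := N3P kN; have [ekx _] := f3P kN; have [exs s1] := g3P kN.
    exists [:: g3 k; f3 k; k; t]; first by path_by_hyps.
    rewrite /= eqxx dom_t !andbT /=; apply/and3P; split.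
    * by apply: (domR _ (f3 k)); rewrite 1?esym ?f3_notinR.
    * by apply: (domR _ (g3 k)); rewrite ?height1_notinR.
    * by apply: (domR _ t); rewrite ?t_notinR.
  + have [ekt _] := N5P kN; have [ekc _] := f5P kN; have [ecv _] := g5P kN.
    exists [:: g5 k; f5 k; k; t]; first by path_by_hyps.
    rewrite /= eqxx dom_t !andbT /=; apply/and3P; split.
    * by apply: (domR _ (f5 k)); rewrite 1?esym ?f5_notinR.
    * by apply: (domR _ k); rewrite 1?esym ?N5_notinR.
    * by apply: (domR _ t); rewrite ?t_notinR.
- exists [:: sq; xw; w; t]; first by path_by_hyps.
  rewrite /= eqxx dom_t dom_w !andbT /=; apply/andP; split.
  * by apply: (domR _ lq); rewrite ?lq_notinR.
  * by apply: (domR _ sq); rewrite ?height1_notinR.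
Qed.

Lemma config_contra : False.
Proof.
apply: (exclusion_contra (P := pairs) (w := w) (b := t) (q := xw) (sq := sq))
  TDset_compl_R => //.
- by rewrite !inE eqxx.
- by rewrite (negbTE (nonadj_of_height esym bal _ _)) // t4 sq1.
move=> a eat aw; have := height_adj esym bal eat; rewrite t4 => -[a5|[a3]].
  have aN : a \in N5 by rewrite !inE eat a5 eqxx.
  have [eac ct] := f5P aN.
  by exists (g5 a, f5 a); rewrite ?eac ?ct // !inE imset_f ?orbT.
have aN : a \in N3 by rewrite !inE aw eat -a3 eqxx.
have [eax x2] := f3P aN.
exists (g3 a, f3 a); first by rewrite !inE imset_f ?orbT.
by rewrite /= eax; apply: (@height_neq _ e); rewrite x2 t4.
Qed.

End Configuration.

Lemma height_neq4 t : ht t != 4.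
Proof.
apply/negP => /eqP t4; have [w etw w3] := height_down esym bal t4.
have [xw ewxw xw2] := height_down esym bal w3.
have [sq exwsq sq1] := height_down esym bal xw2.
have [lq esqlq lf_lq] := height1_leaf_nbr esym bal sq1.
exact: (config_contra t4 etw w3 ewxw xw2 exwsq sq1 esqlq lf_lq).
Qed.

End Graph.
End HeightFour.

Module TwoV2Nbrs.
Section Graph.
Variables (T : finType) (e : rel T).
Hypothesis esym : symmetric e.
Hypothesis eirr : irreflexive e.
Hypothesis bal : balanced e.
Hypothesis acyclic : ~ has_cycle e.
Hypothesis no_isolated : forall z, exists a, e z a.
Hypothesis unm : unmixed e.

Local Notation N := (nbhd e).
Local Notation ht := (height e).
Local Notation TDset_of_walks := (TDset_of_dominated_walks esym eirr acyclic no_isolated).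
Local Notation exclusion_contra := (unmixed_exclusion_contra esym bal).

Hypothesis height_le3 : forall v, ht v <= 3.
Hypothesis V2_nbr_V1 : forall v, ht v = 2 -> #|N v :&: Vh e 1| = 1.

Lemma V2_nbr_V1_uniq v a b :
  ht v = 2 -> e v a -> ht a = 1 -> e v b -> ht b = 1 -> a = b.
Proof.
move=> v2 eva a1 evb b1; have /eqP/cards1P[c Nv] := V2_nbr_V1 v2.
have : a \in N v :&: Vh e 1 by rewrite !inE esym eva a1 eqxx.
have : b \in N v :&: Vh e 1 by rewrite !inE esym evb b1 eqxx.
by rewrite Nv !inE => /eqP -> /eqP ->.
Qed.

Lemma height2_nbr v a : ht v = 2 -> e v a -> ht a != 1 -> ht a = 3.
Proof.
by move=> v2 eva; have := height_adj esym bal eva; have := height_le3 a; rewrite v2; lia.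
Qed.

Lemma height3_nbr v a : ht v = 3 -> e v a -> ht a = 2.
Proof.
by move=> v3 eva; have := height_adj esym bal eva; have := height_le3 a; rewrite v3; lia.
Qed.

(* The vertex [y] is forced by [wy]; its neighbour [s] sees [x]
   forced by [wx], every other neighbour [u] of height 3 sees [f3 u] forced by
   [g3 u]; and [y'] replaces [y] and the leaf at [sq]. *)
Section Configuration.
Variables (s x y wx wy y' sq ls lq : T).
Hypotheses (s1 : ht s = 1) (esx : e s x) (esy : e s y) (x2 : ht x = 2) (y2 : ht y = 2).
Hypotheses (xy : x != y) (exwx : e x wx) (wx3 : ht wx = 3).
Hypotheses (eywy : e y wy) (wy3 : ht wy = 3).
Hypotheses (ewyy' : e wy y') (y'y : y' != y) (y'2 : ht y' = 2) (ey'sq : e y' sq).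
Hypotheses (sq1 : ht sq = 1) (esls : e s ls) (lf_ls : leaf e ls).
Hypotheses (esqlq : e sq lq) (lf_lq : leaf e lq).

Let N3 := N y :&: Vh e 3 :\ wy.
Let f3 u := nbr_such e u (fun z => z != y).
Let g3 u := nbr_such e (f3 u) (fun z => ht z == 1).

Lemma N3P u : u \in N3 -> [/\ e u y, ht u = 3 & u != wy].
Proof. by rewrite !inE => /and3P[-> -> /eqP ->]. Qed.

Lemma f3P u : u \in N3 -> [/\ e u (f3 u), f3 u != y & ht (f3 u) = 2].
Proof.
move=> /N3P[_ u3 _]; have [|euq qy] := @nbr_suchP _ e u (fun z => z != y).
  by apply: (other_nbr esym); rewrite u3.
by split=> //; apply: height3_nbr euq.
Qed.

Lemma g3P u : u \in N3 -> e (f3 u) (g3 u) /\ ht (g3 u) = 1.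
Proof.
move=> /f3P[_ _ q2]; have [z eqz z1] := height_down esym bal q2.
have [|-> /eqP //] := @nbr_suchP _ e (f3 u) (fun z => ht z == 1).
by exists z; rewrite ?z1.
Qed.

Lemma s_nadj_f3 u : u \in N3 -> ~~ e s (f3 u).
Proof.
move=> uN; have [euy u3 _] := N3P uN; have [euq qy q2] := f3P uN.
by walk y [:: u; f3 u].
Qed.

Lemma s_nadj_y' : ~~ e s y'.
Proof. by walk y [:: wy; y']. Qed.

Lemma sq_nadj_f3 u : u \in N3 -> ~~ e sq (f3 u).
Proof.
move=> uN; have [euy u3 uwy] := N3P uN; have [euq _ q2] := f3P uN.
case: (eqVneq y' (f3 u)) => [y'q|y'q].
  suff : ~~ e y' u by rewrite y'q esym euq.
  by walk wy [:: y; u].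
by walk y' [:: wy; y; u; f3 u].
Qed.

Lemma y_nadj_wx : ~~ e y wx.
Proof. by walk s [:: x; wx]. Qed.

Lemma x_nadj_wy : ~~ e x wy.
Proof. by walk s [:: y; wy]. Qed.

Lemma f3_nadj_wy u : u \in N3 -> ~~ e (f3 u) wy.
Proof.
move=> uN; have [euy _ uwy] := N3P uN; have [euq qy q2] := f3P uN.
by walk u [:: y; wy].
Qed.

Lemma f3_nadj_wx u : u \in N3 -> f3 u != x -> ~~ e (f3 u) wx.
Proof.
move=> uN qx; have [euy _ _] := N3P uN; have [euq _ _] := f3P uN.
have wxu : wx != u by apply: contraNneq y_nadj_wx => ->; rewrite esym.
apply/negP => eqwx; suff : ~~ e wx x by rewrite esym exwx.
by walk (f3 u) [:: u; y; s; x].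
Qed.

Lemma f3_nadj_g3 u u' : u \in N3 -> u' \in N3 -> f3 u != f3 u' -> ~~ e (f3 u) (g3 u').
Proof.
move=> uN u'N qq'; have [euy u3 _] := N3P uN; have [euq qy q2] := f3P uN.
have [eu'y u'3 _] := N3P u'N; have [eu'q _ _] := f3P u'N; have [eqs sg1] := g3P u'N.
by walk u [:: y; u'; f3 u'; g3 u'].
Qed.

Lemma s_nbr_uniq v a : ht v = 2 -> e v s -> e v a -> ht a = 1 -> a = s.
Proof. by move=> v2 evs eva a1; apply: (V2_nbr_V1_uniq v2 eva a1 evs s1). Qed.

Let pairs := (wy, y) |: ((wx, x) |: [set (g3 u, f3 u) | u in N3]).
Let R := exclusion e pairs sq.

Lemma notinR r : (e r wy -> r = y) -> (e r wx -> r = x) ->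
  {in N3, forall u, e r (g3 u) -> r = f3 u} -> (e r sq -> ht r != 2) -> r \notin R.
Proof.
move=> rwy rwx rsg rsq; apply: notin_exclusion rsq => p.
by rewrite !inE => /orP[/eqP-> //|/orP[/eqP-> //|/imsetP[u uN ->]]]; apply: rsg.
Qed.

Lemma height1_notinR r : ht r = 1 -> r \notin R.
Proof.
move=> r1; apply: notinR; last by rewrite r1.
- by rewrite (negbTE (nonadj_of_height esym bal _ _)) // r1 wy3.
- by rewrite (negbTE (nonadj_of_height esym bal _ _)) // r1 wx3.
- by move=> u /g3P[_ sg1] /bal; rewrite r1 sg1.
Qed.

Lemma sq_neq_s : sq != s.
Proof. by apply: contraNneq s_nadj_y' => <-; rewrite esym. Qed.

Lemma y_notinR : y \notin R.
Proof.
apply: notinR => //.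
- by rewrite (negbTE y_nadj_wx).
- move=> u uN eys; have [eqs sg1] := g3P uN.
  by move: (s_nadj_f3 uN); rewrite -(s_nbr_uniq y2 _ eys sg1) 1?esym ?eqs.
- by move=> eysq; have := sq_neq_s; rewrite (s_nbr_uniq y2 _ eysq sq1) 1?esym ?eqxx.
Qed.

Lemma x_notinR : x \notin R.
Proof.
apply: notinR => //.
- by rewrite (negbTE x_nadj_wy).
- move=> u uN exs; have [eqs sg1] := g3P uN.
  by move: (s_nadj_f3 uN); rewrite -(s_nbr_uniq x2 _ exs sg1) 1?esym ?eqs.
- by move=> exsq; have := sq_neq_s; rewrite (s_nbr_uniq x2 _ exsq sq1) 1?esym ?eqxx.
Qed.

Lemma f3_notinR u : u \in N3 -> f3 u \notin R.
Proof.
move=> uN; apply: notinR.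
- by rewrite (negbTE (f3_nadj_wy uN)).
- by case: (eqVneq (f3 u) x) => // qx; rewrite (negbTE (f3_nadj_wx uN qx)).
- move=> u' u'N; case: (eqVneq (f3 u) (f3 u')) => // qq'.
  by rewrite (negbTE (f3_nadj_g3 uN u'N qq')).
- by rewrite esym (negbTE (sq_nadj_f3 uN)).
Qed.

Lemma ls_notinR : ls \notin R.
Proof.
have ls0 := leaf_height0 lf_ls; apply: notinR; last by rewrite ls0.
- by rewrite (negbTE (nonadj_of_height esym bal _ _)) // ls0 wy3.
- by rewrite (negbTE (nonadj_of_height esym bal _ _)) // ls0 wx3.
move=> u uN elsg; have [eqs _] := g3P uN.
have sgs : g3 u = s by apply: (leaf_nbr_uniq esym lf_ls elsg); rewrite esym.
by move: (s_nadj_f3 uN); rewrite esym -sgs eqs.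
Qed.

Lemma lq_notinR : lq \notin R.
Proof.
have lq0 := leaf_height0 lf_lq; apply: notinR; last by rewrite lq0.
- by rewrite (negbTE (nonadj_of_height esym bal _ _)) // lq0 wy3.
- by rewrite (negbTE (nonadj_of_height esym bal _ _)) // lq0 wx3.
move=> u uN elsg; have [eqs _] := g3P uN.
have sgsq : g3 u = sq by apply: (leaf_nbr_uniq esym lf_lq elsg); rewrite esym.
by move: (sq_nadj_f3 uN); rewrite esym -sgsq eqs.
Qed.

Lemma TDset_compl_R : TDset e (~: R).
Proof.
have domR q a : a \notin R -> e q a -> dominated e (~: R) q.
  by move=> aR; apply: dominatedW; rewrite inE.
have dom_s : dominated e (~: R) s := domR s ls ls_notinR esls.
have dom_y : dominated e (~: R) y by apply: (domR y s (height1_notinR s1)); rewrite esym.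
have dom_wy : dominated e (~: R) wy by apply: (domR wy y y_notinR); rewrite esym.
apply: (TDset_of_walks (h := s)) => [l a lf ela|r].
  by rewrite inE height1_notinR // (leaf_nbr_height1 esym bal lf ela).
rewrite inE negbK => /exclusionP[[p]|ersq].
- rewrite !inE => /orP[/eqP-> erw|/orP[/eqP-> erw|/imsetP[u uN ->] erp]].
  + by exists [:: wy; y; s]; [path_by_hyps | rewrite /= eqxx dom_wy dom_y dom_s].
  + exists [:: wx; x; s]; first by path_by_hyps.
    rewrite /= eqxx dom_s !andbT /=; apply/andP; split.
    * by apply: (domR _ x); rewrite ?x_notinR 1?esym.
    * by apply: (domR _ s); rewrite ?height1_notinR 1?esym.
  + have [euy _ _] := N3P uN; have [euq _ _] := f3P uN; have [eqs sg1] := g3P uN.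
    exists [:: g3 u; f3 u; u; y; s]; first by path_by_hyps.
    rewrite /= eqxx dom_y dom_s !andbT /=; apply/and3P; split.
    * by apply: (domR _ (f3 u)); rewrite 1?esym ?f3_notinR.
    * by apply: (domR _ (g3 u)); rewrite ?height1_notinR.
    * by apply: (domR _ y); rewrite ?y_notinR.
- exists [:: sq; y'; wy; y; s]; first by path_by_hyps.
  rewrite /= eqxx dom_wy dom_y dom_s !andbT /=; apply/andP; split.
  * by apply: (domR _ lq); rewrite ?lq_notinR.
  * by apply: (domR _ sq); rewrite ?height1_notinR.
Qed.

Lemma config_contra : False.
Proof.
apply: (exclusion_contra (P := pairs) (w := wy) (b := y) (q := y') (sq := sq))
  TDset_compl_R => //.
- by rewrite !inE eqxx.
- apply/negP => eysq; have := sq_neq_s.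
  by rewrite (s_nbr_uniq y2 _ eysq sq1) 1?esym ?eqxx.
move=> a eay awy; case: (eqVneq (ht a) 1) => [a1|a1].
  have -> : a = s by apply: (s_nbr_uniq y2) => //; rewrite esym.
  by exists (wx, x); rewrite /= ?esx // !inE eqxx orbT.
have aN : a \in N3 by rewrite !inE awy eay (height2_nbr y2) 1?esym.
have [eaq qy _] := f3P aN.
by exists (g3 a, f3 a); rewrite ?eaq ?qy // !inE imset_f ?orbT.
Qed.

End Configuration.

Lemma V1_nbr_V2_le1 s : ht s = 1 -> #|N s :&: Vh e 2| <= 1.
Proof.
move=> s1; rewrite leqNgt; apply/negP => /card_gt1P[x [y [+ + xy]]].
rewrite !inE => /andP[exs /eqP x2] /andP[eys /eqP y2].
have esx : e s x by rewrite esym.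
have esy : e s y by rewrite esym.
have [|wx exwx wxs] := other_nbr esym (v := x) s; first by rewrite x2.
have wx3 : ht wx = 3.
  apply: (height2_nbr x2 exwx); apply: contra wxs => /eqP wx1.
  by rewrite (V2_nbr_V1_uniq x2 exwx wx1 exs s1).
have [|wy eywy wys] := other_nbr esym (v := y) s; first by rewrite y2.
have wy3 : ht wy = 3.
  apply: (height2_nbr y2 eywy); apply: contra wys => /eqP wy1.
  by rewrite (V2_nbr_V1_uniq y2 eywy wy1 eys s1).
have [|y' ewyy' y'y] := other_nbr esym (v := wy) y; first by rewrite wy3.
have y'2 := height3_nbr wy3 ewyy'.
have [sq ey'sq sq1] := height_down esym bal y'2.
have [ls esls lf_ls] := height1_leaf_nbr esym bal s1.
have [lq esqlq lf_lq] := height1_leaf_nbr esym bal sq1.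
exact: (config_contra s1 esx esy x2 y2 xy exwx wx3 eywy wy3 ewyy' y'y y'2 ey'sq sq1
          esls lf_ls esqlq lf_lq).
Qed.

End Graph.
End TwoV2Nbrs.

Section UnmixedForward.
Variables (T : finType) (e : rel T).
Hypothesis esym : symmetric e.
Hypothesis eirr : irreflexive e.
Hypothesis bal : balanced e.
Hypothesis acyclic : ~ has_cycle e.
Hypothesis no_isolated : forall z, exists a, e z a.
Hypothesis unm : unmixed e.

Local Notation N := (nbhd e).
Local Notation ht := (height e).
Local Notation TDset_of_walks := (TDset_of_dominated_walks esym eirr acyclic no_isolated).
Local Notation exclusion_contra := (unmixed_exclusion_contra esym bal).

(* [l2] is forced by [s2], and [x] replaces [l2] and the leaf at [s1]. *)
Lemma two_height1_nbrs_contra x s1 s2 :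
  e x s1 -> e x s2 -> ht s1 = 1 -> ht s2 = 1 -> s1 != s2 -> False.
Proof.
move=> exs1 exs2 s1_1 s2_1 s12.
have [l1 es1l1 lf1] := height1_leaf_nbr esym bal s1_1.
have [l2 es2l2 lf2] := height1_leaf_nbr esym bal s2_1.
have l2_nbr a : e l2 a -> a = s2.
  by move=> el2a; apply: (leaf_nbr_uniq esym lf2 el2a); rewrite esym.
have l1_nbr a : e l1 a -> a = s1.
  by move=> el1a; apply: (leaf_nbr_uniq esym lf1 el1a); rewrite esym.
pose P := [set (s2, l2)]; set R := exclusion e P s1.
have notinR r : (e r s2 -> r = l2) -> (e r s1 -> ht r != 2) -> r \notin R.
  by move=> r_s2 r_s1; apply: notin_exclusion => // p /set1P ->.
have height1_notinR r : ht r = 1 -> r \notin R.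
  move=> r1; apply: notinR; last by rewrite r1.
  by move=> ers2; have := bal ers2; rewrite r1 s2_1.
have l1R : l1 \notin R.
  apply: notinR; last by rewrite leaf_height0.
  by move=> /l1_nbr s21; rewrite s21 eqxx in s12.
have l2R : l2 \notin R by apply: notinR => //; rewrite leaf_height0.
have domR q a : a \notin R -> e q a -> dominated e (~: R) q.
  by move=> aR; apply: dominatedW; rewrite inE.
apply: (exclusion_contra (P := P) (w := s2) (b := l2) (q := x) (sq := s1)) => //.
- by rewrite set11.
- by edge_by_hyp.
- by apply/negP => /l2_nbr s12'; rewrite s12' eqxx in s12.
- by move=> a eal2; rewrite (l2_nbr a) ?eqxx // esym.
apply: (TDset_of_walks (h := x)) => [l a lf ela|r].
  by rewrite inE height1_notinR // (leaf_nbr_height1 esym bal lf ela).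
rewrite inE negbK => /exclusionP[[p /set1P-> /= ers2]|ers1].
- exists [:: s2; x]; first by path_by_hyps.
  by rewrite /= eqxx (domR _ l2) // (domR _ s1) // (height1_notinR _ s1_1).
- exists [:: s1; x]; first by path_by_hyps.
  by rewrite /= eqxx (domR _ l1) // (domR _ s1) // (height1_notinR _ s1_1).
Qed.

Lemma unmixed_V2_nbr_V1 v : ht v = 2 -> #|N v :&: Vh e 1| = 1.
Proof.
move=> v2; apply/eqP; rewrite eqn_leq; apply/andP; split.
  rewrite leqNgt; apply/negP => /card_gt1P[s1 [s2 [+ + s12]]].
  rewrite !inE => /andP[es1v /eqP s1_1] /andP[es2v /eqP s2_1].
  by apply: (two_height1_nbrs_contra (x := v) _ _ s1_1 s2_1 s12); rewrite esym.
have [s evs s1] := height_down esym bal v2.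
by apply/card_gt0P; exists s; rewrite !inE esym evs s1 eqxx.
Qed.

Lemma unmixed_height_le3 v : ht v <= 3.
Proof.
rewrite leqNgt; apply/negP => /(height_realized esym bal)[t t4].
by have := HeightFour.height_neq4 esym eirr bal acyclic no_isolated unm t; rewrite t4.
Qed.

Lemma unmixed_V1_nbr_V2 s : ht s = 1 -> #|N s :&: Vh e 2| <= 1.
Proof.
exact: (TwoV2Nbrs.V1_nbr_V2_le1 esym eirr bal acyclic no_isolated unm
          unmixed_height_le3 unmixed_V2_nbr_V1).
Qed.

End UnmixedForward.

Lemma card_eq_of_unique_match (T : finType) (A B : {set T}) (r : rel T) :
  {in A, forall a, #|[set b in B | r a b]| = 1} ->
  {in B, forall b, #|[set a in A | r a b]| = 1} -> #|A| = #|B|.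
Proof.
move=> uA uB.
have count_set (C : {set T}) (P : pred T) : #|[set x in C | P x]| = \sum_(x in C) P x.
  by rewrite -big_mkcondr /= sum1dep_card.
transitivity (\sum_(a in A) \sum_(b in B) r a b).
  by rewrite -sum1_card; apply: eq_bigr => a aA; rewrite -count_set uA.
by rewrite exchange_big -sum1_card; apply: eq_bigr => b bB; rewrite -count_set uB.
Qed.

Section UnmixedBackward.
Variables (T : finType) (e : rel T).
Hypothesis esym : symmetric e.
Hypothesis bal : balanced e.

Local Notation N := (nbhd e).
Local Notation ht := (height e).

Lemma V1_sub_TDset D : TDset e D -> Vh e 1 \subset D.
Proof.
move=> TD; apply/subsetP => s; rewrite inE => /eqP s1.
have [l esl lf] := height1_leaf_nbr esym bal s1.
have [d dD eld] := (TDsetP e D).1 TD l.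
by have -> : s = d by apply: (leaf_nbr_uniq esym lf); rewrite // esym.
Qed.

Hypothesis height_le3 : forall v, ht v <= 3.
Hypothesis V2_nbr_V1 : forall v, v \in Vh e 2 -> #|N v :&: Vh e 1| = 1.
Hypothesis V1_nbr_V2 : forall v, v \in Vh e 1 -> #|N v :&: Vh e 2| <= 1.

Variable D : {set T}.
Hypothesis minD : minimal_TDset e D.

Lemma minimal_height_neq3 d : d \in D -> ht d != 3.
Proof.
move=> dD; apply/eqP => d3; have [u eud priv] := minimal_TDset_private minD dD.
have u2 : ht u = 2.
  by have := height_adj esym bal eud; have := height_le3 u; rewrite d3; lia.
have [s eus s1] := height_down esym bal u2.
have sD : s \in D by apply: (subsetP (V1_sub_TDset minD.1)); rewrite inE s1.
by move: d3; rewrite -(priv s sD eus) s1.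
Qed.

Lemma minimal_height02 d : d \in D :\: Vh e 1 -> ht d = 0 \/ ht d = 2.
Proof.
rewrite !inE => /andP[d1 dD]; have := minimal_height_neq3 dD.
by have := height_le3 d; move: d1; lia.
Qed.

Lemma minimal_height0_private d d' s : d \in D -> ht d = 0 -> e d s ->
  d' \in D -> e d' s -> d' = d.
Proof.
move=> dD d0 eds d'D ed's; have [u eud priv] := minimal_TDset_private minD dD.
have lf : leaf e d := height0_leaf (nbhd_nonempty eud) d0.
by apply: priv; rewrite // (leaf_nbr_uniq esym lf (_ : e d u) eds) // esym.
Qed.

Lemma minimal_nbr_V1 d : d \in D :\: Vh e 1 -> #|[set s in Vh e 1 | e d s]| = 1.
Proof.
move=> dA; have dD : d \in D by move: dA; rewrite inE => /andP[].
have [d0|d2] := minimal_height02 dA; last first.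
  transitivity #|N d :&: Vh e 1|; last by apply: V2_nbr_V1; rewrite inE d2.
  by apply: eq_card => s; rewrite !inE esym andbC.
have [u eud _] := minimal_TDset_private minD dD.
have edu : e d u by rewrite esym.
have lf : leaf e d := height0_leaf (nbhd_nonempty eud) d0.
apply/eqP/cards1P; exists u; apply/setP => s; rewrite !inE.
apply/andP/eqP => [[_ /(leaf_nbr_uniq esym lf edu)]|->] //.
by rewrite (leaf_nbr_height1 esym bal lf edu).
Qed.

Lemma V1_nbr_minimal s : s \in Vh e 1 -> #|[set d in D :\: Vh e 1 | e d s]| = 1.
Proof.
rewrite inE => /eqP s1; apply/eqP; rewrite eqn_leq; apply/andP; split; last first.
  have [d dD esd] := (TDsetP e D).1 minD.1 s.
  apply/card_gt0P; exists d; rewrite !inE dD esym esd !andbT.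
  by apply: contraTneq (bal esd) => ->; rewrite s1.
rewrite leqNgt; apply/negP.
move=> /card_gt1P[d1 [d2 [/setIdP[d1A ed1s] /setIdP[d2A ed2s] d12]]].
have /setDP[d1D _] := d1A; have /setDP[d2D _] := d2A.
have [d1_0|d1_2] := minimal_height02 d1A.
  by move: d12; rewrite (minimal_height0_private d1D d1_0 ed1s d2D ed2s) eqxx.
have [d2_0|d2_2] := minimal_height02 d2A.
  by move: d12; rewrite (minimal_height0_private d2D d2_0 ed2s d1D ed1s) eqxx.
have : 1 < #|N s :&: Vh e 2|.
  by apply/card_gt1P; exists d1, d2; rewrite !inE d1_2 d2_2 ed1s ed2s.
by rewrite ltnNge V1_nbr_V2 // inE s1.
Qed.

Lemma card_minimal_TDset : #|D| = 2 * #|Vh e 1|.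
Proof.
rewrite -(cardsID (Vh e 1) D) (setIidPr (V1_sub_TDset minD.1)).
by rewrite (card_eq_of_unique_match minimal_nbr_V1 V1_nbr_minimal) mul2n addnn.
Qed.

End UnmixedBackward.

Theorem theorem3p37 (T : finType) (e : rel T) :
  is_tree e -> balanced e ->
  (unmixed e <->
   [/\ tree_height_le e 3,
       (forall v, v \in Vh e 2 -> #|nbhd e v :&: Vh e 1| = 1) &
       (forall v, v \in Vh e 1 -> #|nbhd e v :&: Vh e 2| <= 1)]).
Proof.
move=> [[esym eirr] _ conn acyclic] bal.
split=> [unm|[le3 V2_V1 V1_V2] D1 D2 min1 min2]; last first.
  have card_min := card_minimal_TDset esym bal le3 V2_V1 V1_V2.
  by rewrite (card_min D1 min1) (card_min D2 min2).
case: (boolP [exists u, exists v, e u v]) => [/existsP[a /existsP[b eab]]|no_edge].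
  have no_isolated := connected_nbr conn eab.
  split=> [v|v /[!inE] /eqP|v /[!inE] /eqP].
  - exact: unmixed_height_le3 esym eirr bal acyclic no_isolated unm v.
  - exact: unmixed_V2_nbr_V1 esym eirr bal acyclic no_isolated unm v.
  - exact: unmixed_V1_nbr_V2 esym eirr bal acyclic no_isolated unm v.
have height0 v : height e v = 0.
  rewrite /height; case: ifP => // /negbT; rewrite -lt0n => /card_gt0P[u].
  rewrite in_nbhd => euv.
  by move/existsPn: no_edge => /(_ u) /existsPn /(_ v); rewrite euv.
by split=> v; rewrite ?inE height0.
Qed.
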